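(* Let $S$ be a semiring satisfying the standing assumptions below, let $m>1$, $n>1$, and let $A,B\in M_{m\times n}(S)$ be two distinct matrices with $r(A)=r(B)=1$. (i) If $A$ has more nonzero entries than $B$, then there exists $C\in M_{m\times n}(S)$ such that $r(A+C)=1$ and $r(B+C)=2$. (ii) If $A$ and $B$ have the same number of nonzero entries, then there exists $C\in M_{m\times n}(S)$ such that either $r(A+C)=1$ and $r(B+C)=2$, or $r(A+C)=2$ and $r(B+C)=1$.
   Context: A semiring $(S,+,\cdot)$ here means: $(S,+)$ is a commutative monoid with zero $0$, $(S,\cdot)$ is a commutative monoid with identity $1$, multiplication distributes over addition, and $0$ is absorbing. Standing assumptions on $S$: $S$ is additively idempotent ($a+a=a$), multiplicatively cancellative (for every nonzero $a$, $ba=ca$ implies $b=c$), and additively unit irreducible (if $a+b$ is a unit then $a$ or $b$ is a unit). For $A\in M_{m\times n}(S)$, the rank $r(A)$ is the least positive integer $k$ such that $A=BC$ for some $B\in M_{m\times k}(S)$, $C\in M_{k\times n}(S)$; $r(0)=0$. *)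

From HB Require Import structures.
From mathcomp Require Import all_boot all_order all_algebra.
Set Implicit Arguments. Unset Strict Implicit. Unset Printing Implicit Defensive.
Import GRing.Theory.
Local Open Scope ring_scope.

Definition sunit (S : comPzSemiRingType) (a : S) : Prop := exists b : S, a * b = 1.

Definition add_idempotent (S : comPzSemiRingType) : Prop :=
  forall a : S, a + a = a.
Definition mul_cancellative (S : comPzSemiRingType) : Prop :=
  forall a b c : S, a != 0 -> b * a = c * a -> b = c.
Definition add_unit_irreducible (S : comPzSemiRingType) : Prop :=
  forall a b : S, sunit (a + b) -> sunit a \/ sunit b.

Definition factors_through (S : comPzSemiRingType) (m n : nat)
  (A : 'M[S]_(m, n)) (k : nat) : Prop :=
  exists (B : 'M[S]_(m, k)) (C : 'M[S]_(k, n)), A = B *m C.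

(* srank A r  <->  r(A) = r : r(0) = 0, otherwise r is the least positive
   integer k such that A factors through k. *)
Definition srank (S : comPzSemiRingType) (m n : nat) (A : 'M[S]_(m, n))
  (r : nat) : Prop :=
  (A = 0 /\ r = 0%N) \/
  (A <> 0 /\ (0 < r)%N /\ factors_through A r /\
   forall k : nat, (0 < k)%N -> (k < r)%N -> ~ factors_through A k).

Definition nnz (S : comPzSemiRingType) (m n : nat) (A : 'M[S]_(m, n)) : nat :=
  #|[set ij : 'I_m * 'I_n | A ij.1 ij.2 != 0]|.

(* Additive idempotence makes a sum with a nonzero summand nonzero, and
   cancellativity rules out zero divisors.  Hence a rank-one matrix is an
   outer product u v^T with support supp u x supp v, and it satisfies every
   2x2 identity M i j * M i' j' = M i j' * M i' j; conversely a sum of two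
   outer products violating one such identity has rank exactly 2.  So C is
   built from outer products so that A + C is still an outer product, mostly
   because idempotence absorbs C into A (a + a = a), while B + C violates a
   2x2 identity.
   If supp u is not contained in supp x (forced, up to transposition, by
   nnz B < nnz A), take C = u e_j0^T.  Otherwise A and B have the same
   support and A i j <> B i j for some (i, j); then A i j + B i j differs
   from B i j or from A i j, which decides the direction in (ii).  If the
   support leaves the cross of row i and column j, C = A i j e_i e_j^T works.
   Otherwise, up to transposition, A and B live on row i, and C copies the
   row of A into another row, corrected at (i, j) when the two rows are
   proportional, or C is a 2x2 block of copies of A i j when the support is a
   single entry. *)

From mathcomp Require Import all_boot all_order all_algebra.
From mathcomp Require Import ring.
Set Implicit Arguments. Unset Strict Implicit. Unset Printing Implicit Defensive.
Import GRing.Theory.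
Local Open Scope ring_scope.

Section IdempotentCancellative.

Variable S : comPzSemiRingType.
Hypothesis Hidem : add_idempotent S.
Hypothesis Hcanc : mul_cancellative S.

Lemma addr_eq0l (a b : S) : a + b = 0 -> a = 0.
Proof. by move=> ab0; rewrite -(addr0 a) -ab0 addrA Hidem. Qed.

Lemma addr_neq0l (a b : S) : a != 0 -> a + b != 0.
Proof. by apply: contraNneq => /addr_eq0l ->. Qed.

Lemma mul_neq0 (a b : S) : a != 0 -> b != 0 -> a * b != 0.
Proof.
move=> a0 b0; apply: contraNneq a0 => ab0; apply/eqP.
exact: Hcanc b0 (etrans ab0 (esym (mul0r b))).
Qed.

Lemma mul_eq0 (a b : S) : (a * b == 0) = (a == 0) || (b == 0).
Proof.
have [->|a0] := eqVneq a 0; first by rewrite mul0r eqxx.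
have [->|b0] := eqVneq b 0; first by rewrite mulr0 eqxx.
by rewrite (negbTE (mul_neq0 a0 b0)).
Qed.

End IdempotentCancellative.

Lemma addr_neq_or (S : comPzSemiRingType) (a b : S) :
  a != b -> a + b != b \/ a + b != a.
Proof.
move=> ab; have [ab_b|] := eqVneq (a + b) b; last by left.
by right; apply: contraNneq ab => ab_a; rewrite -ab_a ab_b.
Qed.

Lemma exists_neq (n : nat) (l : 'I_n) : (1 < n)%N -> exists j : 'I_n, j != l.
Proof.
move=> n_gt1; have n_gt0 := ltnW n_gt1.
have [->|l0] := eqVneq l (Ordinal n_gt0); first by exists (Ordinal n_gt1).
by exists (Ordinal n_gt0); rewrite eq_sym.
Qed.

Definition unitv (S : comPzSemiRingType) (k : nat) (i : 'I_k) : 'I_k -> S :=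
  fun l => if l == i then 1 else 0.
Arguments unitv {S k} i l.

Lemma unitv_id {S : comPzSemiRingType} (k : nat) (i : 'I_k) : unitv i i = 1 :> S.
Proof. by rewrite /unitv eqxx. Qed.

Lemma unitv_neq {S : comPzSemiRingType} (k : nat) (i l : 'I_k) :
  l != i -> unitv i l = 0 :> S.
Proof. by move=> li; rewrite /unitv (negbTE li). Qed.

Definition supp (S : comPzSemiRingType) (k : nat) (u : 'I_k -> S) : {set 'I_k} :=
  [set l | u l != 0].

Section Outer.

Variables (S : comPzSemiRingType) (m n : nat).
Implicit Types (u w : 'I_m -> S) (v : 'I_n -> S) (M N : 'M[S]_(m, n)).

Definition outer u v : 'M[S]_(m, n) := \matrix_(i, j) (u i * v j).

Lemma outerDl u w v : outer u v + outer w v = outer (u \+ w) v.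
Proof. by apply/matrixP => i j; rewrite !mxE mulrDl. Qed.

Lemma outerDr u v v' : outer u v + outer u v' = outer u (v \+ v').
Proof. by apply/matrixP => i j; rewrite !mxE mulrDr. Qed.

Lemma outer_unitv u v i :
  (forall k, k != i -> u k = 0) -> outer u v = outer (unitv i) (fun l => u i * v l).
Proof.
move=> u0; apply/matrixP => k l; rewrite !mxE.
have [->|ki] := eqVneq k i; first by rewrite !unitv_id mul1r.
by rewrite u0 // unitv_neq // !mul0r.
Qed.

Lemma mx_neqP M N : M <> N -> exists i j, M i j != N i j.
Proof.
move=> MN; have [[i j] /= MNij|MN_eq] := pickP (fun ij => M ij.1 ij.2 != N ij.1 ij.2).
  by exists i, j.
by case: MN; apply/matrixP => i j; have /negbFE/eqP := MN_eq (i, j).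
Qed.

Lemma mx_neq0 M i j : M i j != 0 -> M <> 0.
Proof. by move=> Mij M0; rewrite M0 mxE eqxx in Mij. Qed.

Lemma factors_through_outer u v : factors_through (outer u v) 1.
Proof.
exists (\matrix_(i < m, k < 1) u i), (\matrix_(k < 1, j < n) v j).
by apply/matrixP => i j; rewrite !mxE big_ord1 !mxE.
Qed.

Lemma factors_throughD M N k l :
  factors_through M k -> factors_through N l -> factors_through (M + N) (k + l).
Proof.
move=> [P [Q ->]] [P' [Q' ->]].
by exists (row_mx P P'), (col_mx Q Q'); rewrite mul_row_col.
Qed.

Lemma factors_through_tr M k : factors_through M k -> factors_through M^T k.
Proof. by move=> [P [Q ->]]; exists Q^T, P^T; rewrite trmx_mul. Qed.

Lemma factors_through1_minor M i i' j j' :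
  factors_through M 1 -> M i j * M i' j' = M i j' * M i' j.
Proof. by move=> [P [Q ->]]; rewrite !mxE !big_ord1; ring. Qed.

Lemma srank1_outer u v i j : u i * v j != 0 -> srank (outer u v) 1.
Proof.
move=> uv0; right; split; first by apply: (@mx_neq0 _ i j); rewrite mxE.
do 2!split=> //; first exact: factors_through_outer.
by case.
Qed.

Lemma srank1_outerP M :
  srank M 1 -> exists u v, M = outer u v /\ exists i j, u i * v j != 0.
Proof.
case=> [[_ //]|[M0 [_ [[P [Q PQ]] _]]]].
have MPQ : M = outer (fun i => P i ord0) (fun j => Q ord0 j).
  by apply/matrixP => i j; rewrite PQ !mxE big_ord1.
exists (fun i => P i ord0), (fun j => Q ord0 j); split => //.
have [i [j]] := mx_neqP M0; rewrite MPQ !mxE.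
by exists i, j.
Qed.

Lemma srank2_minor M i i' j j' :
  factors_through M 2 -> M i j * M i' j' != M i j' * M i' j -> srank M 2.
Proof.
move=> M2 minor; right; split; first by move=> M0; rewrite M0 !mxE !mul0r eqxx in minor.
do 2!split=> //.
move=> k k_gt0 k_lt2; have -> : k = 1%N by case: k k_gt0 k_lt2 => [|[|]].
by move=> /factors_through1_minor M1; rewrite M1 eqxx in minor.
Qed.

End Outer.

Lemma outer_tr (S : comPzSemiRingType) (m n : nat) (u : 'I_m -> S) (v : 'I_n -> S) :
  (outer u v)^T = outer v u.
Proof. by apply/matrixP => i j; rewrite !mxE mulrC. Qed.

Lemma srank_tr (S : comPzSemiRingType) (m n : nat) (M : 'M[S]_(m, n)) k :
  srank M k -> srank M^T k.
Proof.
case=> [[-> ->]|[M0 [k_gt0 [Mk Mmin]]]]; first by left; rewrite trmx0.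
right; split; first by move=> MT0; apply: M0; rewrite -[M]trmxK MT0 trmx0.
do 2!split=> //; first exact: factors_through_tr.
move=> l l_gt0 l_lt MTl; apply: (Mmin l l_gt0 l_lt).
by rewrite -[M]trmxK; apply: factors_through_tr.
Qed.

Definition rank_separable (S : comPzSemiRingType) (m n : nat) (A B : 'M[S]_(m, n)) :=
  exists C : 'M[S]_(m, n), srank (A + C) 1 /\ srank (B + C) 2.

Lemma rank_separable_tr (S : comPzSemiRingType) (m n : nat) (A B : 'M[S]_(m, n)) :
  rank_separable A^T B^T -> rank_separable A B.
Proof.
move=> [C [AC BC]]; exists C^T.
by rewrite -[A]trmxK -[B]trmxK -!raddfD; split; apply: srank_tr.
Qed.

Lemma rank_separable_shift (S : comPzSemiRingType) (m n : nat) (A B C : 'M[S]_(m, n)) :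
  rank_separable (A + C) (B + C) -> rank_separable A B.
Proof. by move=> [C' [AC BC]]; exists (C + C'); rewrite !addrA. Qed.

Lemma nnz_outer (S : comPzSemiRingType) (Hcanc : mul_cancellative S) (m n : nat)
    (u : 'I_m -> S) (v : 'I_n -> S) :
  nnz (outer u v) = (#|supp u| * #|supp v|)%N.
Proof.
rewrite /nnz -cardsX; apply: eq_card => -[i j].
by rewrite !inE mxE /= mul_eq0 // negb_or.
Qed.

Section Witnesses.

Variables (S : comPzSemiRingType) (m n : nat).
Hypothesis Hidem : add_idempotent S.
Hypothesis Hcanc : mul_cancellative S.
Hypotheses (Hm : (1 < m)%N) (Hn : (1 < n)%N).
Implicit Types (u x : 'I_m -> S) (v y p q : 'I_n -> S) (i r : 'I_m) (j l : 'I_n).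

Lemma rank_separable_supp_row u v x y i j r l i1 :
  u i * v j != 0 -> x r * y l != 0 -> u i1 != 0 -> x i1 = 0 ->
  rank_separable (outer u v) (outer x y).
Proof.
move=> uv0 xy0 u_i1 x_i1.
have [j0 j0l] := exists_neq l Hn; have lj0 : l != j0 by rewrite eq_sym.
exists (outer u (unitv j0)); split.
  rewrite outerDr; apply: (srank1_outer (i := i) (j := j)) => /=.
  by rewrite mulrDr addr_neq0l.
apply: (srank2_minor (i := i1) (i' := r) (j := j0) (j' := l)).
  exact: factors_throughD (factors_through_outer _ _) (factors_through_outer _ _).
rewrite !mxE x_i1 !unitv_id (unitv_neq lj0) !(mul0r, mulr0, add0r, addr0, mulr1).
exact: mul_neq0.
Qed.

Lemma rank_separable_bump (A B : 'M[S]_(m, n)) i i' j j' :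
  srank A 1 -> factors_through (B + outer (unitv i) (fun l => A i j * unitv j l)) 2 ->
  i' != i -> j' != j -> B i' j' != 0 ->
  B i j * B i' j' = B i j' * B i' j -> B i j + A i j != B i j ->
  rank_separable A B.
Proof.
move=> A1 BC2 i'i j'j B'0 Bminor ABij.
exists (outer (unitv i) (fun l => A i j * unitv j l)); split.
  suff -> : A + outer (unitv i) (fun l => A i j * unitv j l) = A by [].
  apply/matrixP => k l; rewrite !mxE.
  have [->|ki] := eqVneq k i; last by rewrite unitv_neq // mul0r addr0.
  have [->|lj] := eqVneq l j; last by rewrite (unitv_neq lj) !mulr0 addr0.
  by rewrite !unitv_id mul1r mulr1 Hidem.
apply: (srank2_minor (i := i) (i' := i') (j := j) (j' := j')) => //.
rewrite !mxE !unitv_id (unitv_neq i'i) (unitv_neq j'j) !(mul0r, mulr0, mul1r, mulr1, addr0).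
by rewrite -Bminor; apply: contra_neq ABij; apply: Hcanc.
Qed.

Lemma rank_separable_off_cross u v x y i j i' j' :
  i' != i -> j' != j -> x i' * y j' != 0 -> x i * y j + u i * v j != x i * y j ->
  rank_separable (outer u v) (outer x y).
Proof.
move=> i'i j'j xy' xyuv.
have uv0 : u i * v j != 0 by apply: contraNneq xyuv => ->; rewrite addr0.
apply: (rank_separable_bump (i := i) (i' := i') (j := j) (j' := j')) => //.
- exact: srank1_outer uv0.
- exact: factors_throughD (factors_through_outer _ _) (factors_through_outer _ _).
- by rewrite mxE.
- exact: factors_through1_minor (factors_through_outer _ _).
- by rewrite !mxE.
Qed.

Lemma rank_separable_row_minor p q i i0 j j1 j2 :
  i0 != i -> p j != 0 -> q j1 * p j2 != q j2 * p j1 ->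
  rank_separable (outer (unitv i) p) (outer (unitv i) q).
Proof.
move=> i0i pj pq; have ii0 : i != i0 by rewrite eq_sym.
exists (outer (unitv i0) p); split.
  rewrite outerDl; apply: (srank1_outer (i := i) (j := j)) => /=.
  by rewrite !unitv_id (unitv_neq ii0) addr0 mul1r.
apply: (srank2_minor (i := i) (i' := i0) (j := j1) (j' := j2)).
  exact: factors_throughD (factors_through_outer _ _) (factors_through_outer _ _).
by rewrite !mxE !unitv_id (unitv_neq i0i) (unitv_neq ii0) !(mul0r, mul1r, addr0, add0r).
Qed.

Lemma rank_separable_row_bump p q i i0 j j' :
  i0 != i -> j' != j -> p j' != 0 -> q j * p j' = q j' * p j -> q j + p j != q j ->
  rank_separable (outer (unitv i) p) (outer (unitv i) q).
Proof.
move=> i0i j'j pj' cross qp; have ii0 : i != i0 by rewrite eq_sym.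
apply: (@rank_separable_shift _ _ _ _ _ (outer (unitv i0) p)).
have Aij : (outer (unitv i) p + outer (unitv i0) p) i j = p j.
  by rewrite !mxE !unitv_id (unitv_neq ii0) mul1r mul0r addr0.
apply: (rank_separable_bump (i := i) (i' := i0) (j := j) (j' := j')); rewrite ?Aij //.
- rewrite outerDl; apply: (srank1_outer (i := i) (j := j')) => /=.
  by rewrite !unitv_id (unitv_neq ii0) addr0 mul1r.
- rewrite addrAC outerDr.
  exact: factors_throughD (factors_through_outer _ _) (factors_through_outer _ _).
- by rewrite !mxE !unitv_id (unitv_neq i0i) mul0r mul1r add0r.
- by rewrite !mxE !unitv_id (unitv_neq i0i) (unitv_neq ii0) !(mul0r, mul1r, addr0, add0r).
- by rewrite !mxE !unitv_id (unitv_neq ii0) mul0r mul1r addr0.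
Qed.

Lemma rank_separable_single p q i i0 j j0 :
  i0 != i -> j0 != j -> (forall l, l != j -> p l = 0) -> (forall l, l != j -> q l = 0) ->
  p j != 0 -> p j + q j != p j ->
  rank_separable (outer (unitv i) p) (outer (unitv i) q).
Proof.
move=> i0i j0j p0 q0 pj qp.
have ii0 : i != i0 by rewrite eq_sym.
have jj0 : j != j0 by rewrite eq_sym.
pose C := outer (fun k => p j * (unitv i k + unitv i0 k)) (fun l => unitv j l + unitv j0 l).
exists C; split.
  have -> : outer (unitv i) p + C = C.
    apply/matrixP => k l; rewrite !mxE.
    have [->|ki] := eqVneq k i; last by rewrite unitv_neq // mul0r add0r.
    have [->|lj] := eqVneq l j; last by rewrite p0 // mulr0 add0r.
    by rewrite !unitv_id (unitv_neq jj0) (unitv_neq ii0) !(mul1r, addr0, mulr1) Hidem.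
  apply: (srank1_outer (i := i0) (j := j0)) => /=.
  by rewrite !unitv_id (unitv_neq i0i) (unitv_neq j0j) !(add0r, mulr1).
apply: (srank2_minor (i := i) (i' := i0) (j := j) (j' := j0)).
  exact: factors_throughD (factors_through_outer _ _) (factors_through_outer _ _).
rewrite !mxE !unitv_id (unitv_neq i0i) (unitv_neq ii0) (unitv_neq j0j) (unitv_neq jj0) (q0 j0 j0j).
rewrite !(mul0r, mul1r, mulr1, addr0, add0r).
by apply: contra_neq qp => qpp; rewrite addrC; exact: Hcanc pj qpp.
Qed.

Lemma rank_separable_row p q i j :
  p j != 0 -> q j != 0 -> p j != q j ->
  rank_separable (outer (unitv i) p) (outer (unitv i) q) \/
  rank_separable (outer (unitv i) q) (outer (unitv i) p).
Proof.
move=> pj qj pq; have [i0 i0i] := exists_neq i Hm.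
have [[j1 j2] /= cross|cross] := pickP (fun jj => q jj.1 * p jj.2 != q jj.2 * p jj.1).
  by left; apply: (rank_separable_row_minor (j := j) (j1 := j1) (j2 := j2) i0i).
have {}cross j1 j2 : q j1 * p j2 = q j2 * p j1 by apply/eqP/negbFE/(cross (j1, j2)).
have cross' j1 j2 : p j1 * q j2 = p j2 * q j1 by rewrite mulrC cross mulrC.
have [j' /= /andP[j'j pj']|single] := pickP (fun l => (l != j) && (p l != 0)).
  have qj' : q j' != 0.
    by apply: contraNneq (mul_neq0 Hcanc pj' qj) => qj'0; rewrite cross' qj'0 mulr0.
  have [pqq|pqp] := addr_neq_or pq.
    by left; apply: (rank_separable_row_bump i0i j'j pj' (cross j j')); rewrite addrC.
  by right; apply: (rank_separable_row_bump i0i j'j qj' (cross' j j')).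
have p0 l : l != j -> p l = 0.
  by move=> lj; apply/eqP; have := single l; rewrite /= lj => /negbFE.
have q0 l : l != j -> q l = 0.
  move=> lj; apply/eqP; have := cross' l j.
  by rewrite p0 // mul0r => /esym/eqP; rewrite mul_eq0 // (negbTE pj).
have [j0 j0j] := exists_neq j Hn.
have [pqq|pqp] := addr_neq_or pq.
  by right; apply: (rank_separable_single i0i j0j q0 p0 qj); rewrite addrC.
by left; apply: (rank_separable_single i0i j0j p0 q0 pj pqp).
Qed.

Lemma rank_separable_row_outer u v x y i j :
  (forall k, k != i -> u k = 0) -> (forall k, k != i -> x k = 0) ->
  u i * v j != 0 -> x i * y j != 0 -> u i * v j != x i * y j ->
  rank_separable (outer u v) (outer x y) \/ rank_separable (outer x y) (outer u v).
Proof.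
by move=> u0 x0; rewrite (outer_unitv v u0) (outer_unitv y x0); apply: rank_separable_row.
Qed.

End Witnesses.

Section Separation.

Variables (S : comPzSemiRingType) (m n : nat).
Hypothesis Hidem : add_idempotent S.
Hypothesis Hcanc : mul_cancellative S.
Hypotheses (Hm : (1 < m)%N) (Hn : (1 < n)%N).
Implicit Types (u x : 'I_m -> S) (v y : 'I_n -> S) (i r : 'I_m) (j l : 'I_n).

Lemma rank_separable_supp u v x y i j r l :
  u i * v j != 0 -> x r * y l != 0 ->
  ~~ ((supp u \subset supp x) && (supp v \subset supp y)) ->
  rank_separable (outer u v) (outer x y).
Proof.
move=> uv0 xy0; rewrite negb_and => /orP[] /subsetPn[k].
  all: rewrite !inE negbK => uk /eqP xk.
  exact: (rank_separable_supp_row Hidem Hcanc Hn (i1 := k) uv0 xy0 uk xk).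
apply: rank_separable_tr; rewrite !outer_tr.
apply: (rank_separable_supp_row Hidem Hcanc Hm (i := j) (j := i) (r := l) (l := r) (i1 := k))
  => //; by rewrite mulrC.
Qed.

Lemma rank_separable_cross u v x y i j :
  (forall k, (u k == 0) = (x k == 0)) -> (forall l, (v l == 0) = (y l == 0)) ->
  (forall k l, k != i -> l != j -> u k * v l = 0) ->
  u i * v j != 0 -> x i * y j != 0 -> u i * v j != x i * y j ->
  rank_separable (outer u v) (outer x y) \/ rank_separable (outer x y) (outer u v).
Proof.
move=> ux_0 vy_0 uv_cross uv0 xy0 uvxy.
have [i' /= /andP[i'i ui']|row_i] := pickP (fun k => (k != i) && (u k != 0)).
  have v0 l : l != j -> v l = 0.
    move=> lj; apply/eqP; have /eqP := uv_cross i' l i'i lj.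
    by rewrite mul_eq0 // (negbTE ui').
  have y0 l : l != j -> y l = 0 by move=> lj; apply/eqP; rewrite -vy_0 v0.
  have := rank_separable_row_outer Hidem Hcanc Hn Hm (v := u) (y := x) (j := i) v0 y0.
  rewrite ![v j * _]mulrC ![y j * _]mulrC => /(_ uv0 xy0 uvxy).
  by case=> sep; [left|right]; apply: rank_separable_tr; rewrite !outer_tr.
have u0 k : k != i -> u k = 0.
  by move=> ki; apply/eqP; have := row_i k; rewrite /= ki => /negbFE.
have x0 k : k != i -> x k = 0 by move=> ki; apply/eqP; rewrite -ux_0 u0.
exact: (rank_separable_row_outer Hidem Hcanc Hm Hn (v := v) (y := y) (j := j) u0 x0).
Qed.

Lemma rank_separable_same_supp u v x y :
  supp u = supp x -> supp v = supp y -> outer u v <> outer x y ->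
  rank_separable (outer u v) (outer x y) \/ rank_separable (outer x y) (outer u v).
Proof.
move=> ux vy AB.
have ux_0 k : (u k == 0) = (x k == 0).
  by have /setP/(_ k) := ux; rewrite !inE => /(congr1 negb); rewrite !negbK.
have vy_0 l : (v l == 0) = (y l == 0).
  by have /setP/(_ l) := vy; rewrite !inE => /(congr1 negb); rewrite !negbK.
have uvxy_0 k l : (u k * v l == 0) = (x k * y l == 0).
  by rewrite !mul_eq0 // ux_0 vy_0.
have [i [j]] := mx_neqP AB; rewrite !mxE => uvxy.
have uv0 : u i * v j != 0.
  by apply: contra_neq uvxy => uv0; rewrite uv0; apply/esym/eqP; rewrite -uvxy_0 uv0.
have xy0 : x i * y j != 0 by rewrite -uvxy_0.
have [[i' j'] /= /and3P[i'i j'j uv']|off_cross] :=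
  pickP (fun kl => [&& kl.1 != i, kl.2 != j & u kl.1 * v kl.2 != 0]).
  have xy' : x i' * y j' != 0 by rewrite -uvxy_0.
  have [h|h] := addr_neq_or uvxy.
    by left; apply: (rank_separable_off_cross Hidem Hcanc i'i j'j xy'); rewrite addrC.
  by right; apply: (rank_separable_off_cross Hidem Hcanc i'i j'j uv').
apply: (rank_separable_cross ux_0 vy_0 _ uv0 xy0 uvxy) => k l ki lj.
by apply/eqP; have := off_cross (k, l); rewrite /= ki lj => /negbFE.
Qed.

End Separation.

Theorem lemma4p1 (S : comPzSemiRingType)
  (Hidem : add_idempotent S) (Hcanc : mul_cancellative S)
  (Hirr : add_unit_irreducible S)
  (m n : nat) (Hm : (1 < m)%N) (Hn : (1 < n)%N)
  (A B : 'M[S]_(m, n)) (HAB : A <> B)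
  (HA : srank A 1) (HB : srank B 1) :
  ((nnz B < nnz A)%N ->
     exists C : 'M[S]_(m, n), srank (A + C) 1 /\ srank (B + C) 2) /\
  (nnz A = nnz B ->
     exists C : 'M[S]_(m, n),
       (srank (A + C) 1 /\ srank (B + C) 2) \/
       (srank (A + C) 2 /\ srank (B + C) 1)).
Proof.
have [u [v [EA [i [j uv0]]]]] := srank1_outerP HA.
have [x [y [EB [r [l xy0]]]]] := srank1_outerP HB.
subst A B; split=> [ltBA|_].
  apply: (rank_separable_supp Hidem Hcanc Hm Hn uv0 xy0).
  apply: contraTN ltBA => /andP[sux svy].
  by rewrite -leqNgt !nnz_outer // leq_mul // subset_leq_card.
suff [[C AB]|[C [BC AC]]] :
    rank_separable (outer u v) (outer x y) \/ rank_separable (outer x y) (outer u v).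
- by exists C; left.
- by exists C; right.
have [/andP[sux svy]|nsub] := boolP ((supp u \subset supp x) && (supp v \subset supp y)).
  have [/andP[sxu syv]|nsub] := boolP ((supp x \subset supp u) && (supp y \subset supp v)).
    by apply: (rank_separable_same_supp Hidem Hcanc Hm Hn _ _ HAB); apply/eqP;
      rewrite eqEsubset ?sux ?sxu ?svy ?syv.
  by right; apply: (rank_separable_supp Hidem Hcanc Hm Hn xy0 uv0).
by left; apply: (rank_separable_supp Hidem Hcanc Hm Hn uv0 xy0).
Qed.
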